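(* Let $G$ be a very well-covered graph and let $M$ be a perfect matching of $G$. Then no edge $xy\in M$ lies on a triangle of $G$, and no edge $xy\in M$ lies on an induced (chordless) cycle of $G$ of length $q\geq 5$. Equivalently: for every $q=3$ or $q\geq5$, no edge of an induced subgraph of $G$ isomorphic to the chordless cycle $C_q$ belongs to a perfect matching of $G$.
   Context: All graphs are finite, simple, undirected. A stable set is a set of pairwise non-adjacent vertices; $\alpha(G)$ is the maximum size of a stable set. $G$ is well-covered if all its maximal stable sets have the same cardinality, and $G$ is very well-covered if it is well-covered, has no isolated vertices, and $|V(G)|=2\alpha(G)$. $C_n$ denotes the chordless cycle on $n\ge 3$ vertices. *)

(* A simple graph is a symmetric irreflexive relation e on a finType T. *)
From mathcomp Require Import all_boot.
Set Implicit Arguments. Unset Strict Implicit. Unset Printing Implicit Defensive.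

Section Graphs.
Variables (T : finType) (e : rel T).

Definition stable (S : {set T}) : bool :=
  [forall x in S, forall y in S, ~~ e x y].

Definition alpha : nat := \max_(S : {set T} | stable S) #|S|.

Definition well_covered : Prop :=
  forall S1 S2 : {set T},
    maxset stable S1 -> maxset stable S2 -> #|S1| = #|S2|.

Definition no_isolated : Prop := forall x : T, exists y : T, e x y.

Definition very_well_covered : Prop :=
  [/\ well_covered, no_isolated & #|T| = 2 * alpha].

Definition perfect_matching (M : {set {set T}}) : Prop :=
  (forall A, A \in M -> exists x y, e x y /\ A = [set x; y])
  /\ partition M [set: T].

Definition cyc_adj (q : nat) (i j : 'I_q) : bool :=
  (val j == (val i).+1 %% q) || (val i == (val j).+1 %% q).

Definition induced_cycle (q : nat) (c : 'I_q -> T) : Prop :=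
  injective c /\ forall i j : 'I_q, e (c i) (c j) = cyc_adj i j.

End Graphs.

From mathcomp Require Import all_boot.

Set Implicit Arguments.
Unset Strict Implicit.
Unset Printing Implicit Defensive.

(* Since #|V| = 2 alpha, a perfect matching M has exactly alpha edges, and a
   stable set meets each edge of M at most once.  Hence every maximal stable
   set, having alpha vertices, meets every edge xy of M.  So if u ~ x and
   v ~ y, the vertices u and v cannot lie in a common stable set: they are
   adjacent (and in particular distinct).  On an induced cycle the neighbours
   of a cycle edge xy along the cycle coincide when q = 3 and are
   non-adjacent when q >= 5. *)

Section VeryWellCovered.
Variables (T : finType) (e : rel T).
Hypotheses (e_sym : symmetric e) (e_irr : irreflexive e).

Lemma stableP (S : {set T}) :
  reflect (forall x y, x \in S -> y \in S -> ~~ e x y) (stable e S).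
Proof.
apply: (iffP forallP) => [H x y xS yS | H x].
  by move: (H x); rewrite xS /= => /forallP/(_ y); rewrite yS.
by apply/implyP=> xS; apply/forallP=> y; apply/implyP=> yS; apply: H.
Qed.

Lemma stable2 u v : ~~ e u v -> stable e [set u; v].
Proof.
move=> nuv; apply/stableP => a b; rewrite !inE.
by case/orP=> /eqP->; case/orP=> /eqP->; rewrite ?e_irr // e_sym.
Qed.

Lemma card_stable_le_alpha S : stable e S -> #|S| <= alpha e.
Proof. exact: (leq_bigmax_cond (F := fun S : {set T} => #|S|)). Qed.

Lemma exists_stable_card_alpha : exists2 B, stable e B & #|B| = alpha e.
Proof.
have st0 : stable e set0 by apply/stableP=> x y; rewrite inE.
have : 0 < #|(fun S => stable e S) : pred {set T}| by apply/card_gt0P; exists set0.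
case/(eq_bigmax_cond (fun S : {set T} => #|S|)) => B sB eqB.
by exists B; rewrite // /alpha eqB.
Qed.

Lemma well_covered_maxset_card S :
  well_covered e -> maxset (stable e) S -> #|S| = alpha e.
Proof.
move=> wc maxS; have [B sB cB] := exists_stable_card_alpha.
suff maxB : maxset (stable e) B by rewrite (wc S B maxS maxB) cB.
apply/maxsetP; split=> // C sC BC; apply/eqP; rewrite eq_sym eqEcard BC /=.
by rewrite cB card_stable_le_alpha.
Qed.

Section PerfectMatching.
Variable M : {set {set T}}.
Hypothesis M_perfect : perfect_matching e M.

Lemma cover_perfect_matching : cover M = [set: T].
Proof. by case: M_perfect => _ /and3P[/eqP]. Qed.

Lemma card_perfect_matching : #|T| = 2 * #|M|.
Proof.
case: M_perfect => pairs partM.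
rewrite -cardsT (card_partition partM).
rewrite (eq_bigr (fun _ => 2)) => [|A /pairs[x [y [exy ->]]]].
  by rewrite sum_nat_const mulnC.
by rewrite cards2; case: eqP exy => // ->; rewrite e_irr.
Qed.

Lemma pblock_stable_inj S : stable e S -> {in S &, injective (pblock M)}.
Proof.
case: M_perfect => pairs _ /stableP stS x y xS yS eq_pb.
have xM : x \in cover M by rewrite cover_perfect_matching inE.
have yM : y \in cover M by rewrite cover_perfect_matching inE.
have [a [b [eab pbE]]] := pairs _ (pblock_mem xM).
have := mem_pblock M x; have := mem_pblock M y.
rewrite xM yM -eq_pb pbE !inE => /orP[]/eqP yE /orP[]/eqP xE;
  rewrite xE yE // in xS yS *;
  by have := stS _ _ xS yS; have := stS _ _ yS xS; rewrite eab.
Qed.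

Hypothesis vwc : very_well_covered e.

Lemma card_perfect_matching_alpha : #|M| = alpha e.
Proof.
case: vwc => _ _ cardT; apply/eqP.
by rewrite -(eqn_pmul2l (isT : 0 < 2)) -cardT card_perfect_matching.
Qed.

Lemma maxset_stable_meets_matching S A :
  maxset (stable e) S -> A \in M -> exists2 w, w \in S & w \in A.
Proof.
case: vwc => wc _ _ maxS AM.
have [|[w]] := set_0Vmem (S :&: A); last by rewrite inE => /andP[]; exists w.
move=> SA0; suff : #|S| < #|M|.
  by rewrite well_covered_maxset_card // card_perfect_matching_alpha ltnn.
rewrite -(card_in_imset (pblock_stable_inj (maxsetp maxS))) (cardsD1 A) AM add1n ltnS.
apply/subset_leq_card/subsetP => _ /imsetP[x xS ->].
have xM : x \in cover M by rewrite cover_perfect_matching inE.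
rewrite !inE pblock_mem // andbT; apply: contra_eqN SA0 => /eqP pbA.
by apply/set0Pn; exists x; rewrite inE xS -pbA mem_pblock xM.
Qed.

Lemma matched_neighbors_adj x y u v :
  [set x; y] \in M -> e x u -> e y v -> e u v.
Proof.
move=> xyM exu eyv; apply: contraT => nuv.
have [S maxS uvS] := maxset_exists (stable2 nuv).
have /stableP stS := maxsetp maxS.
have [w wS] := maxset_stable_meets_matching maxS xyM.
rewrite !inE => /orP[]/eqP wE; subst w.
- by have := stS _ _ wS (subsetP uvS u (set21 u v)); rewrite exu.
- by have := stS _ _ wS (subsetP uvS v (set22 u v)); rewrite eyv.
Qed.

End PerfectMatching.
End VeryWellCovered.

Section CycleIndices.
Variables (q : nat) (q_gt0 : 0 < q).

Definition cyc_vertex (k : nat) : 'I_q := Ordinal (ltn_pmod k q_gt0).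

Lemma cyc_vertex_ord (i : 'I_q) : cyc_vertex i = i.
Proof. by apply: val_inj; rewrite /= modn_small. Qed.

Lemma cyc_vertex_mod k l : k = l %[mod q] -> cyc_vertex k = cyc_vertex l.
Proof. by move=> klq; apply: val_inj. Qed.

Lemma cyc_adjE k l :
  cyc_adj (cyc_vertex k) (cyc_vertex l)
  = (l == k.+1 %[mod q]) || (k == l.+1 %[mod q]).
Proof.
by rewrite /cyc_adj /= -[(k %% q).+1]addn1 -[(l %% q).+1]addn1 !modnDml !addn1.
Qed.

Lemma cyc_adj_succ k : cyc_adj (cyc_vertex k) (cyc_vertex k.+1).
Proof. by rewrite cyc_adjE eqxx. Qed.

Lemma cyc_vertex_predS k : cyc_vertex (k + q.-1).+1 = cyc_vertex k.
Proof. by apply: cyc_vertex_mod; rewrite -addnS prednK // modnDr. Qed.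

Lemma cyc_adj_add3 k : 5 <= q -> ~~ cyc_adj (cyc_vertex k) (cyc_vertex (k + 3)).
Proof.
move=> q_ge5; rewrite cyc_adjE negb_or.
have -> : k + 3 = k.+1 + 2 by rewrite addSn addnS.
have -> : (k.+1 + 2).+1 = k + 4 by rewrite addSn !addnS.
apply/andP; split.
  by rewrite -[X in _ == X %[mod q]]addn0 eqn_modDl mod0n !modn_small // (leq_trans _ q_ge5).
by rewrite -[X in X == _ %[mod q]]addn0 eqn_modDl mod0n !modn_small // (leq_trans _ q_ge5).
Qed.
End CycleIndices.

Lemma induced_cycle_edge_notin_matching (T : finType) (e : rel T)
  (e_sym : symmetric e) (e_irr : irreflexive e) (M : {set {set T}})
  (M_perfect : perfect_matching e M) (vwc : very_well_covered e)
  (q : nat) (q_gt0 : 0 < q) (q_ne4 : q = 3 \/ 5 <= q)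
  (c : 'I_q -> T) (c_cycle : induced_cycle e c) (k : nat) :
  [set c (cyc_vertex q_gt0 k); c (cyc_vertex q_gt0 k.+1)] \notin M.
Proof.
case: c_cycle => _ c_adj; apply/negP => kM.
pose p := k + q.-1.
have p_succ : cyc_vertex q_gt0 p.+1 = cyc_vertex q_gt0 k := cyc_vertex_predS q_gt0 k.
have p_add3 : cyc_vertex q_gt0 (p + 3) = cyc_vertex q_gt0 k.+2.
  have -> : p + 3 = k.+2 + q by rewrite /p -{2}(prednK q_gt0) !addnS !addSn addn0.
  by apply: cyc_vertex_mod; rewrite modnDr.
have : e (c (cyc_vertex q_gt0 p)) (c (cyc_vertex q_gt0 (p + 3))).
  apply: matched_neighbors_adj kM _ _ => //.
    by rewrite e_sym -p_succ c_adj cyc_adj_succ.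
  by rewrite p_add3 c_adj cyc_adj_succ.
rewrite c_adj; case: q_ne4 => [q3 | q_ge5]; last by apply/negP/cyc_adj_add3.
have -> : cyc_vertex q_gt0 (p + 3) = cyc_vertex q_gt0 p.
  by apply: cyc_vertex_mod; rewrite q3 modnDr.
by rewrite -c_adj e_irr.
Qed.

Theorem lemma1 (T : finType) (e : rel T)
  (e_sym : symmetric e) (e_irr : irreflexive e)
  (Hvwc : very_well_covered e) (M : {set {set T}})
  (HM : perfect_matching e M) :
  forall (q : nat), q = 3 \/ 5 <= q ->
  forall c : 'I_q -> T, induced_cycle e c ->
  forall i j : 'I_q, cyc_adj i j -> [set c i; c j] \notin M.
Proof.
move=> q q_ne4 c c_cycle.
have q_gt0 : 0 < q by case: q_ne4 => [->|/(leq_trans _)->].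
have edge := induced_cycle_edge_notin_matching e_sym e_irr HM Hvwc q_gt0 q_ne4 c_cycle.
have edge_succ (i j : 'I_q) : val j = i.+1 %% q -> [set c i; c j] \notin M.
  move=> succ; have <- : cyc_vertex q_gt0 i.+1 = j by apply: val_inj.
  by rewrite -{1}(cyc_vertex_ord q_gt0 i) edge.
by move=> i j /orP[]/eqP/edge_succ //; rewrite setUC.
Qed.
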